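(* There is no $x\in\mathbb{R}\setminus\mathbb{Q}$ whose Jacobi sequence contains four consecutive terms $-1,1,1,-1$; that is, there is no $k\ge0$ with $\left(\frac{s_k}{t_k}\right)=-1$, $\left(\frac{s_{k+1}}{t_{k+1}}\right)=\left(\frac{s_{k+2}}{t_{k+2}}\right)=1$, $\left(\frac{s_{k+3}}{t_{k+3}}\right)=-1$. In particular, there is no $x\in\mathbb{R}\setminus\mathbb{Q}$ whose Jacobi sequence is eventually periodic with repeating block $1,1,-1$.
   Context: For $x\in\mathbb{R}\setminus\mathbb{Q}$ with regular continued fraction expansion $x=[a_0,a_1,a_2,\ldots]$, the convergents $s_k/t_k$ are defined by $s_{-1}=1$, $s_0=a_0$, $s_k=a_ks_{k-1}+s_{k-2}$ and $t_{-1}=0$, $t_0=1$, $t_k=a_kt_{k-1}+t_{k-2}$ for $k\ge1$. For an odd natural number $n$ and an integer $m$ coprime to $n$, $\left(\frac{m}{n}\right)$ is the usual Jacobi symbol (equal to $1$ if $n=1$); if $n$ is even and $\gcd(m,n)=1$, one sets $\left(\frac{m}{n}\right)=*$, a fixed symbol different from $\pm1$. The Jacobi sequence of $x$ is $\left(\frac{s_k}{t_k}\right)$, $k\ge 0$. *)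

From HB Require Import structures.
From mathcomp Require Import all_boot all_order all_algebra.
From mathcomp Require Import reals.
Set Implicit Arguments. Unset Strict Implicit. Unset Printing Implicit Defensive.
Import Order.TTheory GRing.Theory Num.Theory.
Local Open Scope ring_scope.

Fixpoint cf_rem (R : realType) (x : R) (k : nat) : R :=
  match k with
  | 0 => x
  | k'.+1 => (cf_rem x k' - (Num.floor (cf_rem x k'))%:~R)^-1
  end.

Definition cf_digit (R : realType) (x : R) (k : nat) : int :=
  Num.floor (cf_rem x k).

(* Convergent recursion: returns (s_{k-1}, s_k, t_{k-1}, t_k), with
   s_{-1}=1, s_0=a_0, t_{-1}=0, t_0=1. *)
Fixpoint conv (a : nat -> int) (k : nat) : int * int * int * int :=
  match k with
  | 0 => (1, a 0, 0, 1)
  | k'.+1 =>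
      let: (sp, s, tp, t) := conv a k' in
      (s, a k * s + sp, t, a k * t + tp)
  end.

Definition conv_s (a : nat -> int) (k : nat) : int := (conv a k).1.1.2.
Definition conv_t (a : nat -> int) (k : nat) : int := (conv a k).2.

Definition legendre (m : int) (p : nat) : int :=
  if (p %| `|m|%N)%N then 0
  else if [exists y : 'I_p, ((y * y) %% p)%N == `|(m %% p%:Z)%Z|%N] then 1
  else -1.

Definition jacobi (m : int) (n : nat) : int :=
  \prod_(p <- primes n) legendre m p ^+ logn p n.

(* Jacobi symbol with the convention (m/n) = * (here: None) for n even. *)
Definition jacobi_ext (m : int) (n : int) : option int :=
  if odd `|n|%N then Some (jacobi m `|n|%N) else None.

Definition jacobi_seq (R : realType) (x : R) (k : nat) : option int :=
  jacobi_ext (conv_s (cf_digit x) k) (conv_t (cf_digit x) k).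

From HB Require Import structures.
From mathcomp Require Import all_boot all_order all_algebra.
From mathcomp Require Import reals.
From mathcomp Require Import cyclic finfield.
From mathcomp Require Import zify ring lra.
Set Implicit Arguments. Unset Strict Implicit. Unset Printing Implicit Defensive.
Import Order.TTheory GRing.Theory Num.Theory.

(* Let e_i be the parity of (t_i - 1)/2 when the denominator t_i is odd.
   Reducing s_(i+1) t_i - s_i t_(i+1) = (-1)^i modulo t_i and modulo t_(i+1)
   expresses (s_i/t_i)(s_(i+1)/t_(i+1)) through (t_(i+1)/t_i)(t_i/t_(i+1)),
   which quadratic reciprocity evaluates:
     (s_i/t_i)(s_(i+1)/t_(i+1)) = (-1)^(e_i (1 - e_(i+1)) + i (e_i + e_(i+1))).
   For a block -1, 1, 1, -1 starting at k these three relations have no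
   solution in e_k, ..., e_(k+3), whatever the parity of k. *)

Lemma sum_ord_succ_leq (n c : nat) : \sum_(i < n) (i.+1 <= c) = minn n c.
Proof.
elim: n => [|n IHn]; first by rewrite big_ord0; lia.
by rewrite big_ord_recr /= IHn; case: (leqP n.+1 c) => /=; lia.
Qed.

Section LatticeCount.
Variables p q : nat.
Hypotheses (p_odd : odd p) (q_odd : odd q) (pq_coprime : coprime p q).

Lemma mul_succ_neq (i j : nat) : i < q./2 -> p * i.+1 != q * j.+1.
Proof.
move=> ilt; apply/eqP => pi_eq_qj.
have : q %| p * i.+1 by rewrite pi_eq_qj dvdn_mulr.
rewrite Gauss_dvdr 1?coprime_sym // => /(dvdn_leq (ltn0Sn i)).
by have := odd_double_half q; rewrite q_odd; lia.
Qed.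

Lemma divn_mul_succ_count (j : nat) : j < p./2 ->
  q * j.+1 %/ p = \sum_(i < q./2) (p * i.+1 < q * j.+1).
Proof.
move=> jlt; have p_gt0 : 0 < p by case: (p) p_odd.
have := odd_double_half p; have := odd_double_half q; rewrite p_odd q_odd => hq hp.
have -> : \sum_(i < q./2) (p * i.+1 < q * j.+1) = \sum_(i < q./2) (i.+1 <= q * j.+1 %/ p).
  apply: eq_bigr => i _; congr (nat_of_bool _).
  by rewrite ltn_neqAle mul_succ_neq //= leq_divRL // mulnC.
rewrite sum_ord_succ_leq.
have : q * j.+1 %/ p < q./2.+1.
  rewrite ltn_divLR //.
  have : q * j.+1 <= q * p./2 by rewrite leq_mul2l jlt orbT.
  nia.
lia.
Qed.

End LatticeCount.

(* Counting the lattice points of the rectangle (0, p/2) x (0, q/2) on either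
   side of its diagonal; no point lies on the diagonal since p, q are coprime. *)
Lemma sum_divn_lattice (p q : nat) : odd p -> odd q -> coprime p q ->
  \sum_(j < p./2) (q * j.+1 %/ p) + \sum_(i < q./2) (p * i.+1 %/ q) = p./2 * q./2.
Proof.
move=> p_odd q_odd pq_coprime; have qp_coprime : coprime q p by rewrite coprime_sym.
rewrite (eq_bigr _ (fun j _ => divn_mul_succ_count p_odd q_odd pq_coprime (ltn_ord j))).
rewrite (eq_bigr _ (fun i _ => divn_mul_succ_count q_odd p_odd qp_coprime (ltn_ord i))).
rewrite [X in _ + X]exchange_big -big_split /=.
transitivity (\sum_(j < p./2) \sum_(i < q./2) 1).
  apply: eq_bigr => j _; rewrite -big_split /=; apply: eq_bigr => i _.
  by have := mul_succ_neq p_odd q_odd pq_coprime j (ltn_ord i); case: ltngtP.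
by rewrite (eq_bigr (fun _ => q./2)) => [|j _]; rewrite sum_nat_const card_ord ?muln1.
Qed.

Local Open Scope ring_scope.

Section FiniteFieldSquares.
Variable F : finFieldType.

Lemma card_finField_gt0 : (0 < #|F|)%N.
Proof. by apply/card_gt0P; exists 0. Qed.

Lemma expf_card_pred (x : F) : x != 0 -> x ^+ #|F|.-1 = 1.
Proof.
move=> x_neq0; have := expf_card x.
rewrite -(prednK card_finField_gt0) exprS => /(congr1 (fun y => x^-1 * y)).
by rewrite mulKf // mulVf.
Qed.

Lemma finField_prim_root : exists z : F, (#|F|.-1).-primitive_root z.
Proof.
have card_gt0 : (0 < #|F|.-1)%N.
  by rewrite -(cardC1 0); apply/card_gt0P; exists 1; rewrite !inE oner_eq0.
have units_roots : all (#|F|.-1).-unity_root (enum (predC1 (0 : F))).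
  by apply/allP => x; rewrite mem_enum !inE unity_rootE => /expf_card_pred ->.
have [|z _ ?] := hasP (has_prim_root card_gt0 units_roots (enum_uniq _) _); last by exists z.
by rewrite -cardE cardC1.
Qed.

Hypothesis F_odd : odd #|F|.
Let h := (#|F|.-1)./2.

Lemma card_pred_half : #|F|.-1 = (h * 2)%N.
Proof.
move: F_odd; rewrite -(prednK card_finField_gt0) /= => /negbTE F'_even.
by rewrite -[LHS](odd_double_half #|F|.-1) F'_even muln2.
Qed.

Lemma half_card_gt0 : (0 < h)%N.
Proof.
have : (1 < #|F|)%N by apply/card_gt1P; exists 0, 1; rewrite !inE eq_sym oner_eq0.
by have := card_pred_half; rewrite /h; lia.
Qed.

Lemma expf_half_card (x : F) : x != 0 -> x ^+ h = 1 \/ x ^+ h = -1.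
Proof.
move=> x_neq0; have : (x ^+ h) ^+ 2 == 1 by rewrite -exprM -card_pred_half expf_card_pred.
by rewrite sqrf_eq1 => /orP[] /eqP ->; [left | right].
Qed.

(* A generator z of the unit group satisfies z^h = -1 but z^h != 1. *)
Lemma finField_N1_neq1 : (-1 : F) != 1.
Proof.
have [z z_prim] := finField_prim_root.
have z_h : (z ^+ h) ^+ 2 = 1 by rewrite -exprM -card_pred_half prim_expr_order.
have z_h_neq1 : z ^+ h != 1.
  rewrite -(expr0 z) (eq_prim_root_expr z_prim) mod0n.
  by rewrite modn_small; have := half_card_gt0; rewrite ?card_pred_half; lia.
by move/eqP: z_h; rewrite sqrf_eq1 (negbTE z_h_neq1) /= => /eqP <-.
Qed.

Lemma euler_criterion (x : F) : x != 0 -> (exists y, y * y = x) <-> x ^+ h = 1.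
Proof.
move=> x_neq0; split.
  move=> [y y2]; have y_neq0 : y != 0 by apply: contraNneq x_neq0 => y0; rewrite -y2 y0 mul0r.
  by rewrite -y2 -expr2 -exprM mulnC -card_pred_half expf_card_pred.
have [z z_prim] := finField_prim_root.
have [[i _] /= ->] := prim_rootP z_prim (expf_card_pred x_neq0).
rewrite -exprM => /eqP; rewrite -(expr0 z) (eq_prim_root_expr z_prim) mod0n => /eqP ih.
have : (#|F|.-1 %| i * h)%N by rewrite /dvdn ih.
rewrite card_pred_half mulnC dvdn_pmul2r ?half_card_gt0 // => /dvdnP[j ->].
by exists (z ^+ j); rewrite -exprD addnn -muln2.
Qed.

Definition qchar (x : F) : int := if x == 0 then 0 else if x ^+ h == 1 then 1 else -1.

Lemma qchar_sign (x : F) (k : nat) : x ^+ h = (-1) ^+ k -> qchar x = (-1) ^+ k.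
Proof.
move=> x_h; have x_neq0 : x != 0.
  apply: contra_eq_neq x_h => ->.
  by rewrite expr0n gtn_eqF ?half_card_gt0 // eq_sym signr_eq0.
rewrite /qchar (negbTE x_neq0) x_h -[_ ^+ k]signr_odd -[_ ^+ k]signr_odd.
by case: (odd k); rewrite ?eqxx // (negbTE finField_N1_neq1).
Qed.

Lemma qcharM (x y : F) : qchar (x * y) = qchar x * qchar y.
Proof.
have [->|x_neq0] := eqVneq x 0; first by rewrite mul0r /qchar eqxx mul0r.
have [->|y_neq0] := eqVneq y 0; first by rewrite mulr0 /qchar eqxx mulr0.
have sign_h (z : F) : z != 0 -> exists b : bool, z ^+ h = (-1) ^+ b.
  by move=> z_neq0; case: (expf_half_card z_neq0) => ->; [exists false | exists true].
have [[a x_h] [b y_h]] := (sign_h x x_neq0, sign_h y y_neq0).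
rewrite (qchar_sign x_h) (qchar_sign y_h) -exprD; apply: qchar_sign.
by rewrite exprMn x_h y_h exprD.
Qed.

Lemma qcharN1 : qchar (-1) = (-1) ^+ h.
Proof. exact: qchar_sign. Qed.

End FiniteFieldSquares.

Lemma qchar1 (F : finFieldType) : qchar (1 : F) = 1.
Proof. by rewrite /qchar oner_eq0 expr1n eqxx. Qed.

Section Legendre.
Variable p : nat.
Hypotheses (p_prime : prime p) (p_odd : odd p).

Lemma Fp_card_odd : odd #|'F_p|.
Proof. by rewrite card_Fp. Qed.

Lemma Fp_half_card : (#|'F_p|.-1)./2 = p./2.
Proof. by rewrite card_Fp // -{1}(odd_double_half p) p_odd /= doubleK. Qed.

Lemma modz_abs_lt (m : int) : (`|(m %% p)%Z|%N < p)%N.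
Proof.
have p_gt0 : (0 < p)%N := prime_gt0 p_prime.
have m_mod_ge0 : 0 <= (m %% p)%Z by apply: modz_ge0; lia.
by rewrite -ltz_nat gez0_abs // ltz_pmod.
Qed.

Lemma intr_Fp (m : int) : (m%:~R : 'F_p) = (`|(m %% p)%Z|%N)%:R.
Proof.
have m_mod_ge0 : 0 <= (m %% p)%Z by apply: modz_ge0; have := prime_gt0 p_prime; lia.
rewrite {1}(divz_eq m p) rmorphD rmorphM /= (_ : (p%:Z)%:~R = (p%:R : 'F_p)) //.
by rewrite pchar_Fp_0 // mulr0 add0r -[(m %% p)%Z]gez0_abs // -pmulrn.
Qed.

Lemma intr_Fp_eq0 (m : int) : ((m%:~R : 'F_p) == 0) = (p %| `|m|)%N.
Proof.
rewrite intr_Fp -(Fp_nat_mod p_prime) -[X in _ == X]/(0%:R) -(Fp_nat_mod p_prime).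
rewrite -(inj_eq val_inj) /= !val_Fp_nat // !modn_mod modn_small ?modz_abs_lt // absz_eq0.
rewrite -[(p %| _)%N]/((p%:Z) %| m)%Z.
by apply/idP/idP => [/eqP/dvdz_mod0P // | /dvdz_mod0P ->].
Qed.

Lemma sqr_ordP (r : nat) : (r < p)%N ->
  [exists y : 'I_p, ((y * y) %% p)%N == r] <-> (exists y : 'F_p, y * y = r%:R).
Proof.
move=> r_lt; split.
  by move/existsP=> [y /eqP y2]; exists (val y)%:R; rewrite -natrM -Fp_nat_mod // y2.
move=> [y y2]; apply/existsP.
have y_lt : (val y < p)%N by have := ltn_ord y; rewrite [X in (_ < X)%N -> _]Fp_cast.
exists (Ordinal y_lt); apply/eqP => /=.
have : nat_of_ord ((val y * val y)%:R : 'F_p) = ((val y * val y) %% p)%N by rewrite val_Fp_nat.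
by rewrite natrM natr_Zp y2 val_Fp_nat // modn_small.
Qed.

Lemma legendre_qchar (m : int) : legendre m p = qchar (m%:~R : 'F_p).
Proof.
rewrite /legendre /qchar intr_Fp_eq0; case: ifP => // p_ndvd_m.
have m_neq0 : (m%:~R : 'F_p) != 0 by rewrite intr_Fp_eq0 p_ndvd_m.
have m_sqr := sqr_ordP (modz_abs_lt m); rewrite -intr_Fp in m_sqr.
have m_euler := euler_criterion Fp_card_odd m_neq0.
case: ifP => [/m_sqr/m_euler -> // | m_nsqr].
by case: eqP => // /m_euler/m_sqr; rewrite m_nsqr.
Qed.

Lemma legendreM (m n : int) : legendre (m * n) p = legendre m p * legendre n p.
Proof. by rewrite !legendre_qchar rmorphM qcharM ?Fp_card_odd. Qed.

Lemma legendreN1 : legendre (-1) p = (-1) ^+ p./2.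
Proof. by rewrite legendre_qchar rmorphN1 qcharN1 ?Fp_card_odd // Fp_half_card. Qed.

Lemma legendre1 : legendre 1 p = 1.
Proof. by rewrite legendre_qchar rmorph1 qchar1. Qed.

Lemma legendreX (m : int) (e : nat) : legendre (m ^+ e) p = legendre m p ^+ e.
Proof.
elim: e => [|e IHe]; first by rewrite !expr0 legendre1.
by rewrite !exprS legendreM IHe.
Qed.

Lemma legendre_prod (I : Type) (r : seq I) (P : pred I) (F : I -> int) :
  legendre (\prod_(i <- r | P i) F i) p = \prod_(i <- r | P i) legendre (F i) p.
Proof. exact: (big_morph (legendre^~ p) legendreM legendre1). Qed.

Lemma legendre_congr (m n : int) : (p %| m - n)%Z -> legendre m p = legendre n p.
Proof.
move=> p_dvd; rewrite !legendre_qchar; congr qchar; apply/eqP.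
by rewrite -subr_eq0 -rmorphB intr_Fp_eq0.
Qed.

Lemma p_double_half : p = (p./2).*2.+1.
Proof. by rewrite -{1}(odd_double_half p) p_odd. Qed.

Definition gauss_count (a : nat) : nat := \sum_(j < p./2) (p./2 < (a * j.+1) %% p)%N.

Section GaussLemma.
Variable a : nat.
Hypothesis p_ndvd_a : ~~ (p %| a)%N.
Let h := p./2.
Let r (j : 'I_h) := ((a * j.+1) %% p)%N.
Let f (j : 'I_h) := if (h < r j)%N then (p - r j)%N else r j.

Lemma residue_gt0 j : (0 < r j)%N.
Proof.
rewrite lt0n; apply/negP => /eqP/eqP; rewrite -/(dvdn p _) Euclid_dvdM // (negbTE p_ndvd_a).
by move=> /(dvdn_leq (ltn0Sn j)); have := ltn_ord j; have := p_double_half; rewrite /h; lia.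
Qed.

Lemma residue_lt j : (r j < p)%N.
Proof. by rewrite ltn_mod prime_gt0. Qed.

Lemma abs_residue_bound j : (0 < f j)%N && ((f j).-1 < h)%N.
Proof.
have := residue_gt0 j; have := residue_lt j; have := p_double_half.
by rewrite /f /h; case: ifP; lia.
Qed.

Definition abs_residue_index (j : 'I_h) : 'I_h :=
  Ordinal (proj2 (andP (abs_residue_bound j))).

Lemma residue_inj (j k : 'I_h) : r j = r k -> j = k.
Proof.
wlog le_kj : j k / (k <= j)%N.
  by move=> W; case: (leqP k j) => [/W // | /ltnW/W W' /esym/W'].
move=> /eqP; rewrite eqn_mod_dvd; last by rewrite leq_mul2l ltnS le_kj orbT.
rewrite -mulnBr Euclid_dvdM // (negbTE p_ndvd_a) /= => p_dvd.
case: (posnP (j.+1 - k.+1)) => [diff0 | diff_gt0]; first by apply: ord_inj; lia.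
have := dvdn_leq diff_gt0 p_dvd; have := ltn_ord j; have := p_double_half.
by rewrite /h; lia.
Qed.

(* Two residues never add up to p, since j + k + 2 < p. *)
Lemma abs_residue_index_inj : injective abs_residue_index.
Proof.
move=> j k /(congr1 val) /= fjk_pred.
have := abs_residue_bound j; have := abs_residue_bound k => /andP[fk_gt0 _] /andP[fj_gt0 _].
have {fjk_pred} fjk : f j = f k by lia.
have residue_sum_neq : (r j + r k)%N != p.
  apply/eqP => rjk; have : (p %| a * (j.+1 + k.+1))%N.
    by rewrite mulnDr /dvdn -modnDm -/(r j) -/(r k) rjk modnn.
  rewrite Euclid_dvdM // (negbTE p_ndvd_a) orFb => /(@dvdn_leq p (j.+1 + k.+1) isT).
  by have := ltn_ord j; have := ltn_ord k; have := p_double_half; rewrite /h; lia.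
move: fjk; have := residue_lt j; have := residue_lt k; rewrite /f.
by case: ifP; case: ifP => _ _ rk_lt rj_lt fjk; apply: residue_inj; lia.
Qed.

Lemma natr_mul_succ_sign (j : 'I_h) :
  ((a * j.+1)%:R : 'F_p) = (-1) ^+ (h < r j)%N * ((abs_residue_index j).+1)%:R.
Proof.
rewrite /= prednK ?(andP (abs_residue_bound j)).1 // /f.
have -> : ((a * j.+1)%:R : 'F_p) = (r j)%:R by rewrite /r (Fp_nat_mod p_prime).
case: ifP => _; last by rewrite mul1r.
by rewrite mulN1r natrB ?(ltnW (residue_lt j)) // pchar_Fp_0 // sub0r opprK.
Qed.

Lemma gauss_lemma : (a%:R : 'F_p) ^+ h = (-1) ^+ gauss_count a.
Proof.
set P := \prod_(j < h) ((j.+1)%:R : 'F_p).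
have P_neq0 : P != 0.
  rewrite prodf_seq_neq0; apply/allP => j _ /=; rewrite -(Fp_nat_mod p_prime).
  rewrite -[X in _ != X]/(0%:R) -(Fp_nat_mod p_prime) -(inj_eq val_inj) /=.
  rewrite !val_Fp_nat // !modn_mod modn_small //.
  by have := ltn_ord j; have := p_double_half; rewrite /h; lia.
apply: (mulIf P_neq0); transitivity (\prod_(j < h) ((a * j.+1)%:R : 'F_p)).
  rewrite (eq_bigr (fun j : 'I_h => a%:R * (j.+1)%:R)) => [|j _]; last by rewrite natrM.
  by rewrite big_split /= prodr_const card_ord.
rewrite (eq_bigr _ (fun j _ => natr_mul_succ_sign j)) big_split /= prodrXr.
by rewrite [P](reindex_inj abs_residue_index_inj).
Qed.

(* Reduce a (1 + ... + h) = p * (sum of quotients) + (sum of residues) mod 2,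
   using that f permutes 1, ..., h and f j = r j mod 2 exactly when r j <= h. *)
Lemma gauss_count_parity : odd a ->
  odd (gauss_count a) = odd (\sum_(j < h) (a * j.+1) %/ p)%N.
Proof.
move=> a_odd.
set S := (\sum_(j < h) j.+1)%N; set Q := (\sum_(j < h) (a * j.+1) %/ p)%N.
set R := (\sum_(j < h) r j)%N; set X := (\sum_(j < h) (if (h < r j)%N then 0 else r j))%N.
have aS : (a * S = Q * p + R)%N.
  by rewrite big_distrr big_distrl -big_split; apply: eq_bigr => j _; apply: divn_eq.
have fS : (\sum_(j < h) f j = S)%N.
  rewrite /S [RHS](reindex_inj abs_residue_index_inj) /=.
  by apply: eq_bigr => j _; rewrite prednK ?(andP (abs_residue_bound j)).1.
have RS : (R + S = gauss_count a * p + X.*2)%N.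
  rewrite -fS -big_split /= big_distrl -muln2 big_distrl -big_split /=.
  by apply: eq_bigr => j _; rewrite /f; have := residue_lt j; case: ifP => /= _; lia.
move: (congr1 odd aS) (congr1 odd RS).
rewrite !oddD !oddM a_odd p_odd odd_double /= andbT addbF.
by case: (odd S); case: (odd R); case: (odd Q); case: (odd (gauss_count a)).
Qed.

End GaussLemma.

Lemma legendre_eisenstein (a : nat) : odd a -> ~~ (p %| a)%N ->
  legendre a p = (-1) ^+ (\sum_(j < p./2) a * j.+1 %/ p)%N.
Proof.
move=> a_odd p_ndvd_a; rewrite legendre_qchar -signr_odd -gauss_count_parity // signr_odd.
by apply: qchar_sign; rewrite ?Fp_card_odd // Fp_half_card gauss_lemma.
Qed.

End Legendre.

Lemma legendre_reciprocity (p q : nat) : prime p -> prime q -> odd p -> odd q -> p != q ->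
  legendre q p * legendre p q = (-1) ^+ (p./2 * q./2).
Proof.
move=> p_prime q_prime p_odd q_odd p_neq_q.
have pq_coprime : coprime p q by rewrite prime_coprime // dvdn_prime2.
have p_ndvd_q : ~~ (p %| q)%N by rewrite dvdn_prime2.
have q_ndvd_p : ~~ (q %| p)%N by rewrite dvdn_prime2 // eq_sym.
by rewrite !legendre_eisenstein // -exprD sum_divn_lattice.
Qed.

(* For odd n, n./2 = (n - 1)/2: chi4 is the nontrivial character modulo 4. *)
Definition chi4 (n : nat) : int := (-1) ^+ n./2.

Lemma chi4M (m n : nat) : odd m -> odd n -> chi4 (m * n) = chi4 m * chi4 n.
Proof.
move=> m_odd n_odd; rewrite /chi4 -exprD -signr_odd -[in RHS]signr_odd; congr (_ ^+ _).
have := odd_double_half m; have := odd_double_half n; rewrite m_odd n_odd.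
set x := m./2; set y := n./2 => n_eq m_eq.
have -> : (m * n = true + (x * y * 2 + x + y).*2)%N by rewrite -m_eq -n_eq; lia.
by rewrite half_bit_double !oddD oddM andbF.
Qed.

Lemma chi4X (m e : nat) : odd m -> chi4 (m ^ e) = chi4 m ^+ e.
Proof.
move=> m_odd; elim: e => [|e IHe]; first by rewrite expn0 expr0.
by rewrite expnS chi4M ?IHe ?exprS // oddX m_odd orbT.
Qed.

Lemma chi4_prod (s : seq nat) (e : nat -> nat) : all odd s ->
  chi4 (\prod_(m <- s) m ^ e m) = \prod_(m <- s) chi4 m ^+ e m.
Proof.
elim: s => [|m s IHs]; first by rewrite !big_nil.
move=> /= /andP[m_odd s_odd]; rewrite !big_cons chi4M ?chi4X ?IHs ?oddX ?m_odd ?orbT //.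
rewrite (big_morph odd oddM (erefl : odd 1 = true)) big_all.
by apply/allP => n /(allP s_odd) n_odd; rewrite oddX n_odd orbT.
Qed.

Lemma mem_primes_odd (p n : nat) : odd n -> p \in primes n -> odd p.
Proof.
move=> n_odd; rewrite mem_primes => /and3P[p_prime _ p_dvd].
by case: (even_prime p_prime) => // p2; move: p_dvd; rewrite p2 dvdn2 n_odd.
Qed.

Lemma prod_primes_logn (n : nat) : (0 < n)%N -> n = (\prod_(p <- primes n) p ^ logn p n)%N.
Proof. by move=> n_gt0; rewrite {1}(prod_prime_decomp n_gt0) prime_decompE big_map. Qed.

Lemma natz_prod_primes (n : nat) : (0 < n)%N -> n%:Z = \prod_(q <- primes n) q%:Z ^+ logn q n.
Proof.
move=> n_gt0; rewrite {1}(prod_primes_logn n_gt0) -natz natr_prod.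
by apply: eq_bigr => q _; rewrite natrX natz.
Qed.

Lemma chi4E (n : nat) : odd n -> chi4 n = \prod_(p <- primes n) (-1) ^+ (p./2 * logn p n).
Proof.
move=> n_odd; rewrite {1}(prod_primes_logn (odd_gt0 n_odd)) chi4_prod.
  by apply: eq_bigr => p _; rewrite exprM.
by apply/allP => p; apply: mem_primes_odd.
Qed.

Section JacobiSymbol.
Variable n : nat.
Hypothesis n_odd : odd n.

Lemma primes_odd_prime (p : nat) : p \in primes n -> prime p /\ odd p.
Proof.
move=> p_n; split; last exact: mem_primes_odd p_n.
by move: p_n; rewrite mem_primes => /and3P[].
Qed.

Lemma jacobiM (m m' : int) : jacobi (m * m') n = jacobi m n * jacobi m' n.
Proof.
rewrite /jacobi -big_split; apply: eq_big_seq => p /primes_odd_prime[p_prime p_odd].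
by rewrite legendreM // exprMn.
Qed.

Lemma jacobi1 : jacobi 1 n = 1.
Proof.
rewrite /jacobi big1_seq // => p /andP[_ /primes_odd_prime[p_prime p_odd]].
by rewrite legendre1 // expr1n.
Qed.

Lemma jacobiX (m : int) (e : nat) : jacobi (m ^+ e) n = jacobi m n ^+ e.
Proof.
elim: e => [|e IHe]; first by rewrite !expr0 jacobi1.
by rewrite !exprS jacobiM IHe.
Qed.

Lemma jacobi_congr (m m' : int) : (n%:Z %| m - m')%Z -> jacobi m n = jacobi m' n.
Proof.
move=> n_dvd; rewrite /jacobi; apply: eq_big_seq => p p_n.
have [p_prime p_odd] := primes_odd_prime p_n.
rewrite (@legendre_congr p p_prime p_odd m m') //; apply: dvdz_trans n_dvd.
by rewrite dvdzE; move: p_n; rewrite mem_primes => /and3P[].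
Qed.

Lemma jacobiN1 : jacobi (-1) n = chi4 n.
Proof.
rewrite chi4E /jacobi //; apply: eq_big_seq => p /primes_odd_prime[p_prime p_odd].
by rewrite legendreN1 // exprM.
Qed.

Lemma jacobi_nat_expand (m : nat) : (0 < m)%N ->
  jacobi m n = \prod_(p <- primes n) \prod_(q <- primes m) legendre q p ^+ (logn q m * logn p n).
Proof.
move=> m_gt0; rewrite /jacobi; apply: eq_big_seq => p /primes_odd_prime[p_prime p_odd].
rewrite natz_prod_primes // legendre_prod // -prodrXl.
by apply: eq_bigr => q _; rewrite legendreX // exprM.
Qed.

End JacobiSymbol.

Lemma jacobi_reciprocity (m n : nat) : odd m -> odd n -> coprime m n ->
  jacobi n m * jacobi m n = (-1) ^+ (m./2 * n./2).
Proof.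
move=> m_odd n_odd mn_coprime.
have [m_gt0 n_gt0] := (odd_gt0 m_odd, odd_gt0 n_odd).
set N := (\sum_(q <- primes n) q./2 * logn q n)%N.
have chi4n : chi4 n = (-1) ^+ N.
  by rewrite chi4E // /N -prodrXr; apply: eq_bigr => q _; rewrite exprM.
rewrite !jacobi_nat_expand // [X in _ * X]exchange_big -big_split /=.
transitivity (\prod_(p <- primes m) ((-1 : int) ^+ (p./2 * logn p m)) ^+ N).
  apply: eq_big_seq => p p_m; rewrite -big_split /= /N -prodrXr; apply: eq_big_seq => q q_n.
  have [p_prime p_odd] := primes_odd_prime m_odd p_m.
  have [q_prime q_odd] := primes_odd_prime n_odd q_n.
  have q_notin_m : q \notin primes m.
    by have := coprime_has_primes m_gt0 n_gt0; rewrite mn_coprime => /esym/hasPn/(_ q q_n).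
  have p_neq_q : p != q by apply: contraNneq q_notin_m => <-.
  by rewrite (mulnC (logn p m)) -exprMn legendre_reciprocity // -!exprM; congr (_ ^+ _); lia.
by rewrite prodrXl -chi4E // /chi4 -exprM mulnC exprM -chi4n /chi4 -exprM mulnC.
Qed.

Lemma coprime_det (s s' : int) (t t' : nat) (b : bool) :
  s' * t - s * t' = (-1) ^+ b -> coprime t t'.
Proof.
move=> det; rewrite /coprime; set g := gcdn t t'.
have : (g%:Z %| (-1) ^+ b)%Z.
  by rewrite -det rpredB // dvdz_mull // dvdzE ?dvdn_gcdl ?dvdn_gcdr.
by rewrite dvdzE abszX /= exp1n dvdn1.
Qed.

Lemma jacobi_det_sign (s s' : int) (t t' : nat) (b : bool) :
  odd t -> odd t' -> s' * t - s * t' = (-1) ^+ b ->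
  jacobi s t * jacobi s' t' =
    (-1) ^+ ((odd t./2 && ~~ odd t'./2) (+) (b && (odd t./2 (+) odd t'./2))).
Proof.
move=> t_odd t'_odd det.
have sign_chi4 u : odd u -> jacobi ((-1) ^+ b) u = (-1) ^+ (b && odd u./2).
  by move=> u_odd; rewrite jacobiX // jacobiN1 // /chi4 -exprM -[LHS]signr_odd oddM oddb andbC.
have mod_t : (-1) ^+ odd t./2 * jacobi s t * jacobi t' t = (-1) ^+ (b && odd t./2).
  rewrite signr_odd -/(chi4 t) -jacobiN1 // -!jacobiM // -sign_chi4 //; apply: jacobi_congr => //.
  by rewrite -det (_ : _ - _ = - s' * t) ?dvdz_mull //; ring.
have mod_t' : jacobi s' t' * jacobi t t' = (-1) ^+ (b && odd t'./2).
  rewrite -jacobiM // -sign_chi4 //; apply: jacobi_congr => //.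
  by rewrite -det (_ : _ - _ = s * t') ?dvdz_mull //; ring.
have recip : jacobi t' t * jacobi t t' = (-1) ^+ (odd t./2 && odd t'./2).
  by rewrite jacobi_reciprocity ?(coprime_det det) // -signr_odd oddM.
have : (-1) ^+ (odd t./2 (+) (odd t./2 && odd t'./2)) * (jacobi s t * jacobi s' t')
       = (-1) ^+ ((b && odd t./2) (+) (b && odd t'./2)).
  by rewrite !signr_addb -recip -mod_t -mod_t'; ring.
move/(congr1 ( *%R ((-1) ^+ (odd t./2 (+) (odd t./2 && odd t'./2))))).
rewrite signrMK => ->; rewrite -signr_addb; congr (_ ^+ _).
by case: (odd t./2); case: (odd t'./2); case: b {det sign_chi4 mod_t mod_t'}.
Qed.

Section Convergents.
Variable a : nat -> int.
Local Notation s := (conv_s a).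
Local Notation t := (conv_t a).

Lemma conv_s_rec k : s k.+2 = a k.+2 * s k.+1 + s k.
Proof. by rewrite /conv_s /=; case: (conv a k) => [[[? ?] ?] ?]. Qed.

Lemma conv_t_rec k : t k.+2 = a k.+2 * t k.+1 + t k.
Proof. by rewrite /conv_t /=; case: (conv a k) => [[[? ?] ?] ?]. Qed.

Lemma conv_det k : s k.+1 * t k - s k * t k.+1 = (-1) ^+ k.
Proof.
elim: k => [|k IHk]; first by rewrite /conv_s /conv_t /=; ring.
by rewrite conv_s_rec conv_t_rec exprS -IHk; ring.
Qed.

Lemma conv_t_gt0 : (forall i, (0 < i)%N -> 0 < a i) -> forall k, 0 < t k.
Proof.
move=> a_gt0; suff tk_gt0 k : 0 < t k /\ 0 < t k.+1 by move=> k; case: (tk_gt0 k).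
elim: k => [|k [tk_gt0 tSk_gt0]]; first by rewrite /conv_t /= mulr1 addr0 a_gt0.
by split => //; rewrite conv_t_rec; have := a_gt0 k.+2 isT; nra.
Qed.

Lemma jacobi_conv_step : (forall i, (0 < i)%N -> 0 < a i) ->
  forall i, odd `|t i|%N -> odd `|t i.+1|%N ->
  jacobi (s i) `|t i|%N * jacobi (s i.+1) `|t i.+1|%N =
    (-1) ^+ ((odd (`|t i|%N)./2 && ~~ odd (`|t i.+1|%N)./2)
             (+) (odd i && (odd (`|t i|%N)./2 (+) odd (`|t i.+1|%N)./2))).
Proof.
move=> a_gt0 i ti_odd tSi_odd; apply: jacobi_det_sign => //.
by rewrite !gez0_abs ?ltW ?conv_t_gt0 // conv_det signr_odd.
Qed.

End Convergents.

Lemma irrational_cf_rem (R : realType) (x : R) k : irrational x -> irrational (cf_rem x k).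
Proof.
move=> x_irr; elim: k => [|k IHk] //= [q _ qE]; apply: IHk.
exists (q^-1 + (Num.floor (cf_rem x k))%:~R) => //.
by rewrite rmorphD fmorphV /= qE invrK ratr_int subrK.
Qed.

Lemma cf_digit_gt0 (R : realType) (x : R) : irrational x ->
  forall i, (0 < i)%N -> 0 < cf_digit x i.
Proof.
move=> x_irr [|i] // _; rewrite /cf_digit /= floor_gt0.
have y_irr : irrational (cf_rem x i) := irrational_cf_rem x_irr.
set y := cf_rem x i in y_irr *; set z := y - (Num.floor y)%:~R.
have y_neq_floor : y != (Num.floor y)%:~R.
  apply/eqP => yE; apply: y_irr.
  by exists (Num.floor y)%:~R; rewrite ?ratr_int.
have z_gt0 : 0 < z by rewrite subr_gt0 lt_neqAle eq_sym y_neq_floor floor_le.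
have z_lt1 : z < 1 by have := floorD1_gt y; rewrite rmorphD /= /z; lra.
by rewrite -[X in X <= _]invr1 lef_pV2 ?posrE ?ltr01 // ltW.
Qed.

Lemma jacobi_ext_Some (m n v : int) :
  jacobi_ext m n = Some v -> odd `|n|%N /\ jacobi m `|n|%N = v.
Proof. by rewrite /jacobi_ext; case: ifP => // n_odd [<-]. Qed.

Lemma jacobi_seq_no_pattern (R : realType) (x : R) (k : nat) : irrational x ->
  ~ [/\ jacobi_seq x k = Some (-1), jacobi_seq x k.+1 = Some 1,
        jacobi_seq x k.+2 = Some 1 & jacobi_seq x k.+3 = Some (-1)].
Proof.
move=> x_irr [/jacobi_ext_Some[o0 j0] /jacobi_ext_Some[o1 j1]].
move=> /jacobi_ext_Some[o2 j2] /jacobi_ext_Some[o3 j3].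
have step := jacobi_conv_step (cf_digit_gt0 x_irr).
move: (step k o0 o1) (step k.+1 o1 o2) (step k.+2 o2 o3).
rewrite (j0 : _ = (-1) ^+ true) (j1 : _ = (-1) ^+ false) (j2 : _ = (-1) ^+ false).
rewrite (j3 : _ = (-1) ^+ true) -!signr_addb => /signr_inj + /signr_inj + /signr_inj; rewrite /=.
by case: (odd k); case: (odd _./2); case: (odd _./2); case: (odd _./2); case: (odd _./2).
Qed.

Theorem theorem9 :
  (forall (R : realType) (x : R), @irrational R x ->
     ~ exists k : nat,
         [/\ jacobi_seq x k = Some (-1), jacobi_seq x k.+1 = Some 1,
             jacobi_seq x k.+2 = Some 1 & jacobi_seq x k.+3 = Some (-1)])
  /\
  (forall (R : realType) (x : R), @irrational R x ->
     ~ exists N : nat, forall j : nat,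
         [/\ jacobi_seq x (N + 3 * j)%N = Some 1,
             jacobi_seq x (N + 3 * j).+1 = Some 1 &
             jacobi_seq x (N + 3 * j).+2 = Some (-1)]).
Proof.
split=> R x x_irr; first by move=> [k]; apply: jacobi_seq_no_pattern.
move=> [N periodic]; apply: (@jacobi_seq_no_pattern _ _ N.+2 x_irr).
have [_ _ jN2] := periodic 0%N; have [jN3 jN4 jN5] := periodic 1%N.
by rewrite muln0 addn0 in jN2; rewrite muln1 addn3 in jN3 jN4 jN5.
Qed.
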